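(* Let $(X,\|\cdot\|)$ be a Banach space, $B_X=\{x\in X:\|x\|\le1\}$ and $B=\{x\in X:\|x\|\ge2\}$. Suppose the ordered pair $(B_X,B)$ has the $UC$ property. If $\{x_n\}_{n=1}^\infty,\{z_n\}_{n=1}^\infty\subset B_X$ satisfy $\lim_{n\to\infty}\left\|\frac{x_n+z_n}{2}\right\|=1$, then $\lim_{n\to\infty}\|x_n-z_n\|=0$.
   Context: $\mathrm{dist}(A,B)=\inf\{\|a-b\|:a\in A,b\in B\}$. The ordered pair $(A,B)$ has the $UC$ property if for all sequences $\{x_n\},\{z_n\}\subset A$, $\{y_n\}\subset B$ with $\lim_n\|x_n-y_n\|=\lim_n\|z_n-y_n\|=\mathrm{dist}(A,B)$ one has $\lim_n\|x_n-z_n\|=0$. *)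

From HB Require Import structures.
From mathcomp Require Import all_boot all_order all_algebra.
From mathcomp Require Import all_classical all_reals all_analysis.
Set Implicit Arguments. Unset Strict Implicit. Unset Printing Implicit Defensive.
Import Order.TTheory GRing.Theory Num.Theory.
Import numFieldNormedType.Exports.
Local Open Scope classical_set_scope.
Local Open Scope ring_scope.

Definition set_dist (R : realType) (X : normedModType R) (A B : set X) : R :=
  inf [set r : R | exists a b, A a /\ B b /\ r = `|a - b|].

Definition UC_property (R : realType) (X : normedModType R) (A B : set X) : Prop :=
  forall (x z y : nat -> X),
    (forall n, A (x n)) -> (forall n, A (z n)) -> (forall n, B (y n)) ->
    (fun n => `|x n - y n|) @ \oo --> set_dist A B ->
    (fun n => `|z n - y n|) @ \oo --> set_dist A B ->
    (fun n => `|x n - z n|) @ \oo --> (0 : R).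

From HB Require Import structures.
From mathcomp Require Import all_boot all_order all_algebra.
From mathcomp Require Import all_classical all_reals all_analysis.
Set Implicit Arguments. Unset Strict Implicit. Unset Printing Implicit Defensive.
Import Order.TTheory GRing.Theory Num.Theory.
Import numFieldNormedType.Exports.
Local Open Scope classical_set_scope.
Local Open Scope ring_scope.

(* The unit ball and the set {2 <= |x|} are at distance 1. Given x, z in the
   unit ball with midpoint m := (x + z)/2 close to the unit sphere, the point
   y := 2 m / |m| lies in {2 <= |x|}, and since x + z = 2 m we get
   |x - y| <= |z| + |2|m| - 2| <= 1 + |2|m| - 2|, and symmetrically for z.
   Both distances therefore tend to dist = 1, and UC forces |x - z| -> 0. *)

Section BallDistance.
Context {R : realType} {X : normedModType R}.

Lemma ball_complement_dist_ge (r s : R) (a b : X) :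
  `|a| <= r -> s <= `|b| -> s - r <= `|a - b|.
Proof.
move=> ha hb; rewrite distrC; apply: le_trans (lerB_dist _ _).
exact: lerB.
Qed.

Lemma normr_rescale (s : R) (w : X) : 0 <= s -> w != 0 ->
  `|(s / `|w|) *: w| = s.
Proof.
move=> s0 w0; rewrite normrZ ger0_norm ?divr_ge0 // -mulrA mulVf ?mulr1 //.
by rewrite normr_eq0.
Qed.

Lemma set_dist_ball_complement (r s : R) (u : X) : 0 <= r -> r <= s ->
  u != 0 -> set_dist [set x : X | `|x| <= r] [set x : X | s <= `|x|] = s - r.
Proof.
move=> r0 rs u0; apply/eqP; rewrite eq_le; apply/andP; split.
  have ->: s - r = `|(r / `|u|) *: u - (s / `|u|) *: u|.
    by rewrite distrC -scalerBl -mulrBl normr_rescale // subr_ge0.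
  apply: ge_inf; first by exists 0 => _ [a [b [_ [_ ->]]]].
  exists ((r / `|u|) *: u), ((s / `|u|) *: u).
  by rewrite /= !normr_rescale // (le_trans r0).
apply: lb_le_inf.
  exists `|(r / `|u|) *: u - (s / `|u|) *: u|, ((r / `|u|) *: u).
  by exists ((s / `|u|) *: u); rewrite /= !normr_rescale // (le_trans r0).
by move=> _ [a [b [ha [hb ->]]]]; exact: ball_complement_dist_ge.
Qed.

Lemma dist_rescaled_midpoint_le (a b m : X) (t : R) :
  a + b = 2 *: m -> m != 0 -> `|a - (t / `|m|) *: m| <= `|b| + `|2 * `|m| - t|.
Proof.
move=> abm m0; have ->: a - (t / `|m|) *: m = (2 - t / `|m|) *: m - b.
  by rewrite scalerBl -abm addrAC addrK.
apply: le_trans (ler_normB _ _) _; rewrite addrC lerD // normrZ.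
have nm0 : `|m| != 0 by rewrite normr_eq0.
rewrite -{2}(ger0_norm (normr_ge0 m)) -normrM mulrBl -mulrA mulVf //.
by rewrite mulr1 mulrC.
Qed.

Lemma cvg_dist_rescaled_midpoint (a b m y : nat -> X) (N : nat) :
  (forall n, `|a n| <= 1) -> (forall n, `|b n| <= 1) ->
  (forall n, 2 <= `|y n|) -> (forall n, a n + b n = 2 *: m n) ->
  (forall n, (N <= n)%N -> m n != 0 /\ y n = (2 / `|m n|) *: m n) ->
  `|m n| @[n --> \oo] --> (1 : R) -> `|a n - y n| @[n --> \oo] --> (1 : R).
Proof.
move=> ha hb yB abm ym m1.
have e1 : 1 + `|2 * `|m n| - 2| @[n --> \oo] --> (1 : R).
  have := cvgD (cvg_cst (1 : R))
    (cvg_norm (cvgB (cvgMl_tmp (a := 2) m1) (cvg_cst (2 : R)))).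
  by rewrite mulr1 subrr normr0 addr0; apply.
apply: (squeeze_cvgr _ (cvg_cst (1 : R)) e1).
exists N => // n /= /ym [m0 yn]; apply/andP; split.
  by have := ball_complement_dist_ge (ha n) (yB n); rewrite -[2]/(1 + 1) addrK.
rewrite yn; apply: le_trans (dist_rescaled_midpoint_le 2 (abm n) m0) _.
by rewrite lerD2r.
Qed.

End BallDistance.

Theorem mainTheorem11 (R : realType) (X : completeNormedModType R) :
  UC_property [set x : X | `|x| <= 1] [set x : X | 2 <= `|x|] ->
  forall x z : nat -> X,
    (forall n, `|x n| <= 1) -> (forall n, `|z n| <= 1) ->
    (fun n => `|(2%:R : R)^-1 *: (x n + z n)|) @ \oo --> (1 : R) ->
    (fun n => `|x n - z n|) @ \oo --> (0 : R).
Proof.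
move=> UC x z hx hz hw.
pose m n := (2%:R : R)^-1 *: (x n + z n).
have [N _ mN0] : \forall n \near \oo, m n != 0.
  have half_lt : \forall n \near \oo, 2^-1 < `|m n|.
    by apply: (cvgr_gt 1 hw); rewrite invf_lt1 // ltr1n.
  apply: filterS half_lt => n; rewrite -normr_gt0; apply: lt_trans.
  by rewrite invr_gt0.
have mN : m N != 0 by apply: mN0 => /=.
(* Where [m n] vanishes, [y n] is just some point of norm 2. *)
pose y n := if m n == 0 then (2 / `|m N|) *: m N else (2 / `|m n|) *: m n.
have yB n : 2 <= `|y n|.
  by rewrite /y; case: eqP => [_|/eqP mn0]; rewrite normr_rescale.
have dist1 : set_dist [set x : X | `|x| <= 1] [set x : X | 2 <= `|x|] = 1.
  rewrite (set_dist_ball_complement ler01 _ mN) ?ler1n //.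
  by rewrite -[2]/(1 + 1) addrK.
have xzm n : x n + z n = 2 *: m n.
  by rewrite /m scalerA mulfV ?scale1r // pnatr_eq0.
have ym n : (N <= n)%N -> m n != 0 /\ y n = (2 / `|m n|) *: m n.
  by move=> Nn; rewrite /y (negbTE (mN0 n Nn)).
apply: (UC x z y hx hz yB); rewrite dist1.
  exact: (cvg_dist_rescaled_midpoint hx hz yB xzm ym hw).
apply: (cvg_dist_rescaled_midpoint hz hx yB _ ym hw) => n.
by rewrite addrC xzm.
Qed.
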